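(* Consider an instance of $k$-robust Steiner forest on an undirected graph $G=(V,E)$ with edge costs $c$ and pair set $U\subseteq V\times V$, a threshold $T\ge0$, and constants $\beta,\gamma>0$ with $\gamma\le\beta/2$. Run the following procedure: start with $S_r=S_f=W=\emptyset$; while there is a pair $(s,t)\in U$ with $d_{G/(S_r\cup S_f)}(s,t)>\beta\frac{T}{k}$, add $(s,t)$ to $S_r$; then, if $d_G(s,w)<\gamma\frac{T}{k}$ for some $w\in W$, add $(s,w)$ to $S_f$ for such a $w$, else add $s$ to $W$; then, if $d_G(t,w')<\gamma\frac Tk$ for some $w'\in W$, add $(t,w')$ to $S_f$ for such a $w'$, else add $t$ to $W$. At termination, $|W|\ge|S_r|\ge|S_f|$.
   Context: $d_G$ is the shortest-path distance in $G$ under edge costs $c$. For a set of vertex pairs $S$, $G/S$ is the graph obtained by identifying the two vertices of each pair in $S$, and $d_{G/S}$ is its shortest-path distance. *)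

From HB Require Import structures.
From mathcomp Require Import all_boot all_order all_algebra.
From mathcomp Require Import classical_sets reals constructive_ereal ereal.
Set Implicit Arguments. Unset Strict Implicit. Unset Printing Implicit Defensive.
Import Order.TTheory GRing.Theory Num.Theory.
Local Open Scope ring_scope.
Local Open Scope classical_set_scope.

Section Graph.
Variables (R : realType) (V : finType).
(* An undirected graph G = (V,E) with edge costs c: an edge {u,v} is stored as
   an ordered pair (u,v) in E and may be traversed in both directions. *)
Variables (E : {set V * V}) (c : V * V -> R).

(* One step of a walk in G/S, from u to v, of cost r: either an edge of G
   (either orientation) with its cost, or a pair of S, whose two vertices are
   identified in G/S (cost 0). *)
Definition gstep (S : {set V * V}) (u v : V) (r : R) : Prop :=
  ((u, v) \in E /\ r = c (u, v)) \/ ((v, u) \in E /\ r = c (v, u)) \/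
  (((u, v) \in S \/ (v, u) \in S) /\ r = 0).

Inductive walk (S : {set V * V}) : V -> V -> R -> Prop :=
| walk_nil x : walk S x x 0
| walk_cons x y z r r' : gstep S x y r -> walk S y z r' -> walk S x z (r + r').

(* d_{G/S}(x,y): shortest-path distance in G/S (+oo if no walk). *)
Definition dist (S : {set V * V}) (x y : V) : \bar R :=
  ereal_inf [set (r%:E)%E | r in [set r | walk S x y r]].

Definition distG (x y : V) : \bar R := dist finset.set0 x y.

Definition state := ({set V * V} * {set V * V} * {set V})%type.

Definition process (rad : R) (v : V) (Sf : {set V * V}) (W : {set V})
    (Sf' : {set V * V}) (W' : {set V}) : Prop :=
  (exists2 w, w \in W & ((distG v w < rad%:E)%E /\ Sf' = (v, w) |: Sf /\ W' = W))
  \/ ((forall w, w \in W -> ~ (distG v w < rad%:E)%E) /\ Sf' = Sf /\ W' = v |: W).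

Definition rs_step (U : {set V * V}) (beta gamma T : R) (k : nat)
    (st st' : state) : Prop :=
  let: (Sr, Sf, W) := st in
  let: (Sr', Sf', W') := st' in
  exists s t, [/\ (s, t) \in U,
    ((beta * (T / k%:R))%:E < dist (Sr :|: Sf) s t)%E,
    Sr' = (s, t) |: Sr &
    exists Sf1 W1, process (gamma * (T / k%:R)) s Sf W Sf1 W1 /\
                   process (gamma * (T / k%:R)) t Sf1 W1 Sf' W'].

Inductive rs_reach (U : {set V * V}) (beta gamma T : R) (k : nat) : state -> Prop :=
| rs_init : rs_reach U beta gamma T k (finset.set0, finset.set0, finset.set0)
| rs_next st st' : rs_reach U beta gamma T k st -> rs_step U beta gamma T k st st' ->
    rs_reach U beta gamma T k st'.

Definition rs_terminal (U : {set V * V}) (beta T : R) (k : nat) (st : state) : Prop :=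
  let: (Sr, Sf, W) := st in
  forall s t, (s, t) \in U ->
    ~ ((beta * (T / k%:R))%:E < dist (Sr :|: Sf) s t)%E.

End Graph.

(* The bound holds at every reachable state, not only at termination.  Label
   vertices so that equal labels are joined by a zero-cost walk in
   G/(S_r ∪ S_f); with K the number of labels on W, the invariant is
   |S_r| + K <= |W| and |S_f| + K <= |S_r|.  In one iteration each endpoint
   v of the new pair (s,t) gets an anchor in W within gamma T/k of v (v itself,
   or the vertex it is attached to through S_f).  The anchors of s and t carry
   different labels, since otherwise s and t would be joined in G/(S_r ∪ S_f)
   at cost <= 2 gamma T/k <= beta T/k.  Adding (s,t) to S_r merges these two
   labels, so K grows by at most (number of new W vertices) - 1, which is
   exactly what both inequalities can afford. *)
From HB Require Import structures.
From mathcomp Require Import all_boot all_order all_algebra.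
From mathcomp Require Import classical_sets reals constructive_ereal ereal.
From mathcomp Require Import zify lra.
Import Order.TTheory GRing.Theory Num.Theory.
Set Implicit Arguments. Unset Strict Implicit.
Local Open Scope ring_scope.

Section Walks.
Variables (R : realType) (V : finType) (E : {set V * V}) (c : V * V -> R).
Implicit Types (S : {set V * V}) (x y z : V) (r : R).

Lemma walk1 S x y r : gstep E c S x y r -> walk E c S x y r.
Proof. by move=> xy; rewrite -[r]addr0; apply: walk_cons xy (walk_nil _ _ _ _). Qed.

Lemma walk_identified S x y : (x, y) \in S \/ (y, x) \in S -> walk E c S x y 0.
Proof. by move=> xyS; apply: walk1; right; right. Qed.

Lemma walk_cat S x y z r r' :
  walk E c S x y r -> walk E c S y z r' -> walk E c S x z (r + r').
Proof.
elim=> [x' | x' y' z' r1 r2 step _ IH] yz; first by rewrite add0r.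
by rewrite -addrA; apply: walk_cons step (IH yz).
Qed.

Lemma walk_cat0 S x y z :
  walk E c S x y 0 -> walk E c S y z 0 -> walk E c S x z 0.
Proof. by move=> xy yz; rewrite -[0]addr0; apply: walk_cat xy yz. Qed.

Lemma walk_rev S x y r : walk E c S x y r -> walk E c S y x r.
Proof.
elim=> [x' | x' y' z' r1 r2 step _ IH]; first exact: walk_nil.
rewrite addrC; apply: walk_cat IH (walk1 _).
by move: step; rewrite /gstep; intuition.
Qed.

Lemma walk_subset S S' x y r :
  S \subset S' -> walk E c S x y r -> walk E c S' x y r.
Proof.
move=> /fintype.subsetP sub; elim=> [x' | x' y' z' r1 r2 step _ IH].
  exact: walk_nil.
apply: walk_cons IH; move: step; rewrite /gstep.
by have := sub (x', y'); have := sub (y', x'); intuition.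
Qed.

Lemma walk_gt_dist S x y a r :
  (a%:E < dist E c S x y)%E -> walk E c S x y r -> a < r.
Proof.
move=> lt_a_d xy; rewrite -lte_fin; apply: lt_le_trans lt_a_d _.
by apply: ereal_inf_lbound; exists r.
Qed.

End Walks.

Section Labellings.
Variables (R : realType) (V : finType) (E : {set V * V}) (c : V * V -> R).
Implicit Types (S : {set V * V}) (L : V -> V) (M : {set V}).

Definition zero_connected_labelling S L :=
  forall x y, L x = L y -> walk E c S x y 0.

Definition merge_labels L M m (x : V) := if L x \in M then m else L x.

Lemma merge_labelsP S S' L M v :
  zero_connected_labelling S L -> S \subset S' -> L v \in M ->
  (forall x, L x \in M -> walk E c S' x v 0) ->
  zero_connected_labelling S' (merge_labels L M (L v)).
Proof.
move=> conL sub Mv toV x y; rewrite /merge_labels.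
case: ifP => Mx; case: ifP => My.
- by move=> _; apply: walk_cat0 (toV x Mx) (walk_rev (toV y My)).
- by move=> eq_v; rewrite -eq_v Mv in My.
- by move=> eq_v; rewrite eq_v Mv in Mx.
- by move=> /conL; apply: walk_subset.
Qed.

Lemma card_merge_labels L M m (W : {set V}) :
  (#|merge_labels L M m @: W| + #|(L @: W) :&: M| <= #|L @: W| + 1)%N.
Proof.
have sub : merge_labels L M m @: W \subset m |: ((L @: W) :\: M).
  apply/fintype.subsetP => _ /imsetP [x Wx ->]; rewrite /merge_labels !inE.
  by case: ifP => Mx; rewrite ?eqxx ?Mx //= imset_f ?orbT.
have := subset_leq_card sub; rewrite cardsU1 -(cardsID M (L @: W)).
by case: (_ \notin _) => /=; lia.
Qed.

Lemma card_imset_setD L (W0 W1 : {set V}) :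
  (#|L @: W1| <= #|L @: W0| + #|W1 :\: W0|)%N.
Proof.
have sub : L @: W1 \subset L @: W0 :|: L @: (W1 :\: W0).
  rewrite -imsetU; apply: imsetS; apply/fintype.subsetP => x W1x.
  by rewrite !inE W1x andbT orbN.
apply: leq_trans (subset_leq_card sub) _.
rewrite cardsU; apply: leq_trans (leq_subr _ _) _.
by rewrite leq_add2l leq_imset_card.
Qed.

End Labellings.

Section Procedure.
Variables (R : realType) (V : finType) (E : {set V * V}) (c : V * V -> R).
Variables (U : {set V * V}) (beta gamma T : R) (k : nat).
Hypothesis rad_ge0 : 0 <= gamma * (T / k%:R).
Hypothesis rad2_le : gamma * (T / k%:R) + gamma * (T / k%:R) <= beta * (T / k%:R).

Lemma process_grows v (Sf Sf' : {set V * V}) (W W' : {set V}) :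
  process E c (gamma * (T / k%:R)) v Sf W Sf' W' ->
  [/\ W \subset W', Sf \subset Sf' & (#|Sf'| + #|W'| <= #|Sf| + #|W| + 1)%N].
Proof.
by case=> [[w _ [_ [-> ->]]] | [_ [-> ->]]];
  rewrite ?finset.subsetUr cardsU1; case: (_ \notin _) => /=; split => //; lia.
Qed.

Lemma process_anchor v (Sf Sf' : {set V * V}) (W W' : {set V}) :
  process E c (gamma * (T / k%:R)) v Sf W Sf' W' ->
  exists e, [/\ e \in W', (v, e) \in Sf' \/ e = v &
    exists2 r, walk E c finset.set0 v e r & r <= gamma * (T / k%:R)].
Proof.
case=> [[w Ww [vw_near [-> ->]]] | [_ [-> ->]]].
- exists w; split; [by [] | by left; rewrite setU11 |].
  case: (ereal_inf_lt vw_near) => _ [r vw <-]; rewrite lte_fin.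
  by exists r => //; apply: ltW.
- exists v; split; [by rewrite setU11 | by right | by exists 0; first exact: walk_nil].
Qed.

Lemma far_pair_fresh (S : {set V * V}) s t :
  ((beta * (T / k%:R))%:E < dist E c S s t)%E -> (s, t) \notin S.
Proof.
move=> /walk_gt_dist far; apply/negP => st.
have /far : walk E c S s t 0 by apply: walk_identified; left.
by rewrite ltNge (le_trans (addr_ge0 rad_ge0 rad_ge0) rad2_le).
Qed.

Lemma far_anchors_apart (S : {set V * V}) L s t es et rs rt :
  zero_connected_labelling E c S L ->
  ((beta * (T / k%:R))%:E < dist E c S s t)%E ->
  walk E c finset.set0 s es rs -> rs <= gamma * (T / k%:R) ->
  walk E c finset.set0 t et rt -> rt <= gamma * (T / k%:R) ->
  L es != L et.
Proof.
move=> conL /walk_gt_dist far ses rs_le tet rt_le; apply/eqP => /conL es_et.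
have := far _ (walk_cat (walk_subset (finset.sub0set _) ses)
                (walk_cat es_et (walk_rev (walk_subset (finset.sub0set _) tet)))).
by rewrite add0r ltNge (le_trans _ rad2_le) // lerD.
Qed.

Definition labelled_bound (st : state V) : Prop :=
  let: (Sr, Sf, W) := st in
  exists L : V -> V, [/\ zero_connected_labelling E c (Sr :|: Sf) L,
    (#|Sr| + #|L @: W| <= #|W|)%N & (#|Sf| + #|L @: W| <= #|Sr|)%N].

Lemma rs_step_labelled_bound st st' :
  labelled_bound st -> rs_step E c U beta gamma T k st st' -> labelled_bound st'.
Proof.
case: st st' => [[Sr0 Sf0] W0] [[Sr1 Sf1] W1] [L [conL boundR boundF]].
case=> s [t [_ far -> [Sfm [Wm [proc_s proc_t]]]]].
have [W0m Sf0m card_s] := process_grows proc_s.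
have [Wm1 Sfm1 card_t] := process_grows proc_t.
have [es [Wm_es s_es [rs ses rs_le]]] := process_anchor proc_s.
have [et [W1_et t_et [rt tet rt_le]]] := process_anchor proc_t.
have W1_es : es \in W1 by apply: (fintype.subsetP Wm1).
have st_new : (s, t) \notin Sr0.
  by apply: contra (far_pair_fresh far); rewrite inE => ->.
have anchors_apart := far_anchors_apart conL far ses rs_le tet rt_le.
set S1 := (s, t) |: Sr0 :|: Sf1.
have sub01 : Sr0 :|: Sf0 \subset S1.
  by apply: finset.setUSS; [apply: finset.subsetUr | apply: fintype.subset_trans Sfm1].
have S1_edge x y : (x, y) \in S1 -> walk E c S1 y x 0.
  by move=> xy; apply: walk_identified; right.
have ts : walk E c S1 t s 0 by apply: S1_edge; rewrite !inE eqxx.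
have ess : walk E c S1 es s 0.
  case: s_es => [sesf | ->]; last exact: walk_nil.
  by apply: S1_edge; rewrite inE (fintype.subsetP Sfm1 _ sesf) orbT.
have ets : walk E c S1 et s 0.
  case: t_et => [tetf | ->]; last exact: ts.
  by apply: walk_cat0 ts; apply: S1_edge; rewrite inE tetf orbT.
set M := [set L s; L t; L es; L et].
have conL' : zero_connected_labelling E c S1 (merge_labels L M (L s)).
  apply: (merge_labelsP conL sub01) => [|x]; first by rewrite !inE eqxx.
  rewrite !inE -!orbA => /or4P [] /eqP /conL /(walk_subset sub01) x_;
    by [apply: x_ | apply: walk_cat0 x_ _].
have merged : (2 <= #|(L @: W1) :&: M|)%N.
  have <- : #|[set L es; L et]| = 2%N by rewrite cards2 anchors_apart.
  apply: subset_leq_card.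
  by apply/fintype.subsetP => _ /set2P [] ->; rewrite !inE imset_f ?eqxx ?orbT.
have merge_card := card_merge_labels L M (L s) W1.
have grow_card := card_imset_setD L W0 W1.
have W_card := cardsID W0 W1.
rewrite (finset.setIidPr (fintype.subset_trans W0m Wm1)) in W_card.
have Sr_card : #|(s, t) |: Sr0| = #|Sr0|.+1 by rewrite cardsU1 st_new.
exists (merge_labels L M (L s)); rewrite Sr_card; split => //;
  clear -boundR boundF card_s card_t merged merge_card grow_card W_card; lia.
Qed.

Lemma rs_reach_labelled_bound st :
  rs_reach E c U beta gamma T k st -> labelled_bound st.
Proof.
elim=> [|st0 st1 _ IH step]; last exact: rs_step_labelled_bound IH step.
exists id; split; rewrite ?imset0 ?cards0 //.
by move=> x y ->; apply: walk_nil.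
Qed.

End Procedure.

Theorem mainTheorem15 (R : realType) (V : finType) (E : {set V * V})
  (c : V * V -> R) (U : {set V * V}) (k : nat) (T beta gamma : R)
  (c_ge0 : forall e, e \in E -> 0 <= c e)
  (k_gt0 : (0 < k)%N) (T_ge0 : 0 <= T)
  (beta_gt0 : 0 < beta) (gamma_gt0 : 0 < gamma) (gamma_le : gamma <= beta / 2)
  (Sr Sf : {set V * V}) (W : {set V}) :
  rs_reach E c U beta gamma T k (Sr, Sf, W) ->
  rs_terminal E c U beta T k (Sr, Sf, W) ->
  (#|Sr| <= #|W|)%N /\ (#|Sf| <= #|Sr|)%N.
Proof.
move=> reach _.
have unit_ge0 : 0 <= T / k%:R by rewrite divr_ge0 ?ler0n.
have rad_ge0 : 0 <= gamma * (T / k%:R) by rewrite mulr_ge0 // ltW.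
have rad2_le : gamma * (T / k%:R) + gamma * (T / k%:R) <= beta * (T / k%:R).
  by rewrite -mulrDl ler_wpM2r //; move: gamma_le; rewrite ler_pdivlMr ?ltr0n //; lra.
have [L [_ boundR boundF]] := rs_reach_labelled_bound rad_ge0 rad2_le reach.
by split; lia.
Qed.
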